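(* Let $1<\beta<\beta^*$, $L,L^*,\rho>0$, $\bar f\in\mathcal F(\beta^*,L^*,\rho)$ and $r>0$. Set $\gamma_\varepsilon=1/\log\varepsilon^{-2}$, $W_\varepsilon=\Big(\frac{L}{\varepsilon^2}\frac{(\beta+2)(2\beta+1)}{(2\pi)^{2\beta}(\beta-1)}\Big)^{1/(2\beta+1)}$, and define the filter $\lambda^*_k=1$ if $k\le\gamma_\varepsilon W_\varepsilon$ and $\lambda^*_k=\big[1-(k/W_\varepsilon)^{\beta-1}\big]_+$ if $k>\gamma_\varepsilon W_\varepsilon$. Then, as $\varepsilon\to0$, $$\sup_{f\in\mathcal F_{r,\beta,L}(\bar f)}R^\varepsilon[f,\lambda^*]\le(1+o(1))\,C(\beta,L)\,\varepsilon^{\frac{4\beta-4}{2\beta+1}},$$ with $C(\beta,L)=\frac13\Big(\frac{\beta-1}{2\pi(\beta+2)}\Big)^{\frac{2\beta-2}{2\beta+1}}\big(L(2\beta+1)\big)^{\frac3{2\beta+1}}$.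
   Context: For an even $1$-periodic locally square integrable $g$, $g_k=\sqrt2\int_{-1/2}^{1/2}\cos(2\pi kt)g(t)dt$ and $\|g^{(\beta)}\|^2=\sum_{k\ge1}(2\pi k)^{2\beta}g_k^2$. $R^\varepsilon[f,h]=\sum_{k\ge1}(2\pi k)^2[(1-h_k)^2f_k^2+\varepsilon^2h_k^2]$ for a sequence $h\in[0,1]^{\mathbb N}$. $\mathcal F_0(\rho)$: locally square integrable, even, $1$-periodic $f$ with $|\int_{-1/2}^{1/2}f(t)\cos(2\pi t)dt|\ge\rho$; $\mathcal F(\beta^*,L^*,\rho)=\{f\in\mathcal F_0(\rho):\|f^{(\beta^* )}\|\le L^*\}$. $\mathcal F_{r,\beta,L}(\bar f)=\{\bar f+v:\ v\text{ even, 1-periodic},\ \sum_kv_k^2\le r^2,\ \sum_k(2\pi k)^{2\beta}v_k^2\le L\}$. *)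

From HB Require Import structures.
From mathcomp Require Import all_boot all_order all_algebra.
From mathcomp Require Import all_classical all_reals all_analysis.
Set Implicit Arguments. Unset Strict Implicit. Unset Printing Implicit Defensive.
Import Order.TTheory GRing.Theory Num.Theory.
Import numFieldNormedType.Exports.
Local Open Scope classical_set_scope.
Local Open Scope ring_scope.

Section Defs.
Variable R : realType.

Definition even_fun (g : R -> R) := forall t, g (- t) = g t.
Definition periodic1 (g : R -> R) := forall t, g (t + 1) = g t.
Definition loc_sq_int (g : R -> R) :=
  measurable_fun setT g /\
  forall a b : R, (@lebesgue_measure R).-integrable `[a, b] (fun t => ((g t) ^+ 2)%:E).

Definition coef (g : R -> R) (k : nat) : R :=
  Num.sqrt 2 * Rintegral (@lebesgue_measure R) `[-(1/2), 1/2]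
                  (fun t => cos (2 * pi * k%:R * t) * g t).

(* ||g^(beta)||^2 = sum_{k>=1} (2 pi k)^(2 beta) g_k^2  (in extended reals) *)
Definition sob2 (beta : R) (g : R -> R) : \bar R :=
  (\sum_(1 <= k <oo) (((2 * pi * k%:R) `^ (2 * beta)) * (coef g k) ^+ 2)%:E)%E.

Definition l2sq (g : R -> R) : \bar R :=
  (\sum_(1 <= k <oo) ((coef g k) ^+ 2)%:E)%E.

Definition risk (eps : R) (f : R -> R) (h : nat -> R) : \bar R :=
  (\sum_(1 <= k <oo) ((2 * pi * k%:R) ^+ 2 *
      ((1 - h k) ^+ 2 * (coef f k) ^+ 2 + eps ^+ 2 * (h k) ^+ 2))%:E)%E.

Definition F0 (rho : R) (f : R -> R) :=
  [/\ loc_sq_int f, even_fun f, periodic1 f &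
      rho <= `| Rintegral (@lebesgue_measure R) `[-(1/2), 1/2]
                   (fun t => f t * cos (2 * pi * t)) | ].

Definition Fclass (betas Ls rho : R) (f : R -> R) :=
  F0 rho f /\ (sob2 betas f <= (Ls ^+ 2)%:E)%E.

Definition Frbl (r beta L : R) (fbar f : R -> R) :=
  exists v : R -> R, [/\ even_fun v, periodic1 v, loc_sq_int v &
    [/\ f = (fun t => fbar t + v t),
    (l2sq v <= (r ^+ 2)%:E)%E & (sob2 beta v <= L%:E)%E]].

Definition gamma_eps (eps : R) : R := 1 / ln (eps ^-2).

Definition W_eps (beta L eps : R) : R :=
  (L / eps ^+ 2 * ((beta + 2) * (2 * beta + 1) /
      ((2 * pi) `^ (2 * beta) * (beta - 1)))) `^ (1 / (2 * beta + 1)).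

Definition lam_star (beta L eps : R) (k : nat) : R :=
  if k%:R <= gamma_eps eps * W_eps beta L eps then 1
  else Num.max 0 (1 - (k%:R / W_eps beta L eps) `^ (beta - 1)).

Definition Cconst (beta L : R) : R :=
  1 / 3 * ((beta - 1) / (2 * pi * (beta + 2))) `^ ((2 * beta - 2) / (2 * beta + 1))
        * (L * (2 * beta + 1)) `^ (3 / (2 * beta + 1)).

End Defs.

From mathcomp Require Import all_boot all_order all_algebra.
From mathcomp Require Import all_classical all_reals all_analysis.
From mathcomp Require Import measurable_realfun lebesgue_integral_differentiation.
From mathcomp Require Import ring lra.
Set Implicit Arguments. Unset Strict Implicit. Unset Printing Implicit Defensive.
Import Order.TTheory GRing.Theory Num.Theory.
Import numFieldNormedType.Exports.
Local Open Scope ring_scope.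

(* The risk splits into a bias part and a variance part.  Below the threshold [gamma W] the
   filter keeps the coefficient, above it the bias of coefficient [k] is at most
   [(2 pi W)^(2 - 2 beta) (2 pi k)^(2 beta) f_k^2].  Splitting [(fbar_k + v_k)^2] with a weight
   [eta], the [v]-part costs [(1 + eta) (2 pi W)^(2 - 2 beta) L], while the [fbar]-part carries the
   extra factor [(2 pi gamma W)^(2 beta - 2 betas)], negligible because [gamma W -> oo].  The
   variance [eps^2 sum (2 pi k)^2 lambda_k^2] is a Riemann sum equal to
   [eps^2 (2 pi)^2 W^3 (1/3 - 2/(beta + 2) + 1/(2 beta + 1))] up to [O(W^2)] and a contribution
   [(gamma W)^3] of the flat part, negligible because [gamma -> 0].  For the choice of [W_eps]
   both leading terms are multiples of [(2 pi W)^(2 - 2 beta) L] adding up to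
   [C(beta, L) eps^((4 beta - 4)/(2 beta + 1))]. *)

Section powR_inequalities.
Variable R : realType.
Implicit Types a b s t p q W : R.

Lemma gt0_powRD a r s : 0 < a -> a `^ (r + s) = a `^ r * a `^ s.
Proof. by move=> a0; rewrite powRD // (gt_eqF a0) implybT. Qed.

Lemma powR_div a b r : 0 <= a -> 0 < b -> (a / b) `^ r = a `^ r * b `^ (- r).
Proof.
move=> a0 b0; rewrite powRM ?invr_ge0 ?(ltW b0) //.
by rewrite -powR_inv1 ?(ltW b0) // -powRrM mulN1r.
Qed.

Lemma le_powR a b r : 0 <= r -> 0 <= a -> a <= b -> a `^ r <= b `^ r.
Proof. by move=> r0 a0 ab; apply: ge0_ler_powR; rewrite ?nnegrE // (le_trans a0). Qed.

Lemma ge_powRN a b r : 0 < a -> a <= b -> 0 < r -> b `^ (- r) <= a `^ (- r).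
Proof.
move=> a0 ab r0; rewrite !powRN lef_pV2 ?posrE ?powR_gt0 ?(lt_le_trans a0) //.
exact: le_powR (ltW r0) (ltW a0) ab.
Qed.

(* Weighted AM-GM, from the concavity of [ln]. *)
Lemma powR_le_convex s th : 0 < s -> 0 <= th <= 1 -> s `^ th <= th * s + (1 - th).
Proof.
move=> s0 /andP[th0 th1]; set t := Itv01 th0 th1.
have := concave_ln t s0 ltr01; have := convR_gt0 t s0 ltr01.
rewrite !convRE /= ln1 mulr0 addr0 -ln_powR => pos.
by rewrite ler_ln ?posrE ?powR_gt0 // mulr1.
Qed.

Lemma powR_ge_bernoulli t p : 0 <= t -> 1 <= p -> 1 + p * (t - 1) <= t `^ p.
Proof.
move=> t0 p1; have p0 : 0 < p by rewrite (lt_le_trans ltr01).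
have [->|tn0] := eqVneq t 0.
  by rewrite powR0 ?gt_eqF // sub0r mulrN1 subr_le0.
have tp0 : 0 < t `^ p by rewrite powR_gt0 // lt_neqAle eq_sym tn0.
have := @powR_le_convex (t `^ p) p^-1 tp0.
rewrite invr_ge0 (ltW p0) invf_le1 // -powRrM mulfV ?gt_eqF // powRr1 //= => /(_ p1).
move=> /(ler_wpM2l (ltW p0)).
have -> : p * (p^-1 * t `^ p + (1 - p^-1)) = t `^ p + p - 1 by field; rewrite gt_eqF.
lra.
Qed.

Lemma powR_ge_tangent a b p : 0 <= a -> 0 < b -> 1 <= p ->
  b `^ p + p * b `^ (p - 1) * (a - b) <= a `^ p.
Proof.
move=> a0 b0 p1; have p0 : 0 < p by rewrite (lt_le_trans ltr01).
have bp : b `^ p = b * b `^ (p - 1) by rewrite mulr_powRB1 // ltW.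
have -> : a `^ p = (a / b) `^ p * b `^ p.
  by rewrite -powRM ?divr_ge0 ?(ltW b0) // divfK ?gt_eqF.
apply: le_trans (ler_wpM2r (powR_ge0 _ _) (powR_ge_bernoulli (divr_ge0 a0 (ltW b0)) p1)).
by rewrite bp le_eqVlt; apply/orP; left; apply/eqP; field; rewrite gt_eqF.
Qed.

Lemma powRD1_le W q : 0 < W -> 1 <= q -> 2 * q - 2 <= W ->
  (W + 1) `^ q <= W `^ q + 2 * q * W `^ (q - 1).
Proof.
move=> W0 q1 Wq; have q0 : 0 < q by rewrite (lt_le_trans ltr01).
have W10 : 0 < W + 1 by rewrite addr_gt0.
have := powR_ge_tangent (ltW W0) W10 q1.
rewrite -[(W + 1) `^ q](mulr_powRB1 (ltW W10) q0) -[W `^ q](mulr_powRB1 (ltW W0) q0).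
have y0 := powR_ge0 (W + 1) (q - 1).
set y := (W + 1) `^ (q - 1); set z := W `^ (q - 1) => tangent.
have tangent' : (W + 1 - q) * y <= W * z by lra.
have y2z : y <= 2 * z.
  rewrite -(ler_pM2l W0); apply: le_trans (_ : W * y <= 2 * ((W + 1 - q) * y)) _.
    by rewrite mulrA ler_wpM2r //; lra.
  by rewrite [leRHS]mulrCA ler_pM2l.
have -> : (W + 1) * y = (W + 1 - q) * y + q * y by ring.
by rewrite -mulrA (mulrCA 2) lerD // ler_wpM2l // ltW.
Qed.

Lemma sum_powR_ge s M : 0 <= s ->
  M%:R `^ (s + 1) / (s + 1) <= \sum_(1 <= k < M.+1) (k%:R : R) `^ s.
Proof.
move=> s0; have s10 : 0 < s + 1 by rewrite ltr_wpDl.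
elim: M => [|M IH]; first by rewrite big_geq // powR0 ?gt_eqF // mul0r.
rewrite big_nat_recr //= ler_pdivrMr //.
have := powR_ge_tangent (ler0n _ M) (ltr0Sn _ M) (ler_wpDl s0 (lexx 1)).
rewrite addrK -natr1 ler_pdivrMr // in IH *.
lra.
Qed.

Lemma sum_powR_le s M : 0 <= s ->
  \sum_(1 <= k < M.+1) (k%:R : R) `^ s <= M.+1%:R `^ (s + 1) / (s + 1).
Proof.
move=> s0; have s10 : 0 < s + 1 by rewrite ltr_wpDl.
elim: M => [|M IH]; first by rewrite big_geq // powR1 divr_ge0 // ltW.
rewrite big_nat_recr //= ler_pdivlMr //.
have := powR_ge_tangent (ler0n _ M.+2) (ltr0Sn _ M) (ler_wpDl s0 (lexx 1)).
rewrite addrK -[M.+2]addn1 natrD ler_pdivlMr // in IH *.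
lra.
Qed.

Lemma sum_powR_ge_real s W M : 0 <= s -> 1 <= W -> W < M%:R + 1 ->
  W `^ (s + 1) / (s + 1) - W `^ s <= \sum_(1 <= k < M.+1) (k%:R : R) `^ s.
Proof.
move=> s0 W1 WM; have s10 : 0 < s + 1 by rewrite ltr_wpDl.
apply: le_trans (sum_powR_ge M s0); rewrite ler_pdivlMr // mulrBl divfK ?gt_eqF //.
have W10 : 0 <= W - 1 by rewrite subr_ge0.
have := powR_ge_tangent W10 (lt_le_trans ltr01 W1) (ler_wpDl s0 (lexx 1)).
rewrite addrK => tangent.
have : (W - 1) `^ (s + 1) <= M%:R `^ (s + 1) by apply: le_powR; lra.
lra.
Qed.

Lemma sum_powR_le_real s W M : 0 <= s -> 0 < W -> 2 * s <= W -> M%:R <= W ->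
  \sum_(1 <= k < M.+1) (k%:R : R) `^ s <= W `^ (s + 1) / (s + 1) + 2 * W `^ s.
Proof.
move=> s0 W0 sW MW; have s10 : 0 < s + 1 by rewrite ltr_wpDl.
have MW1 : M.+1%:R `^ (s + 1) <= (W + 1) `^ (s + 1).
  by apply: le_powR (ltW s10) (ler0n _ _) _; rewrite -natr1 lerD2r.
have := @powRD1_le W (s + 1) W0 (ler_wpDl s0 (lexx 1)).
rewrite addrK mulrDr mulr1 addrK => /(_ sW) up.
apply: le_trans (sum_powR_le M s0) _; rewrite ler_pdivrMr // mulrDl divfK ?gt_eqF //.
lra.
Qed.

Lemma sqrD_le_weighted a c eta : 0 < eta ->
  (a + c) ^+ 2 <= (1 + eta) * c ^+ 2 + (1 + eta^-1) * a ^+ 2.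
Proof.
move=> eta0; rewrite -subr_ge0.
have -> : (1 + eta) * c ^+ 2 + (1 + eta^-1) * a ^+ 2 - (a + c) ^+ 2
   = (eta * c - a) ^+ 2 / eta by field; rewrite gt_eqF.
by rewrite divr_ge0 ?sqr_ge0 // ltW.
Qed.

End powR_inequalities.

Section taper_sums.
Variable R : realType.

Lemma sum_nat_le_trunc (F : nat -> R) (M N : nat) :
  (forall k, 0 <= F k) -> (forall k, (M < k)%N -> F k = 0) ->
  \sum_(1 <= k < N) F k <= \sum_(1 <= k < M.+1) F k.
Proof.
move=> F0 FM; have [N1|N1] := leqP N 1; first by rewrite big_geq // sumr_ge0.
have [NM|MN] := leqP N M.+1.
  by rewrite [in leRHS](@big_cat_nat _ _ _ N 1 M.+1 _ _ (ltnW N1) NM) /= lerDl sumr_ge0.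
rewrite (@big_cat_nat _ _ _ M.+1 1 N _ _ isT (ltnW MN)) /=.
suff -> : \sum_(M.+1 <= k < N) F k = 0 by rewrite addr0.
by rewrite big_nat_cond big1 // => k /andP[/andP[Mk _] _]; exact: FM.
Qed.

Lemma sum_sqr_le x M : M%:R <= x ->
  \sum_(1 <= k < M.+1) (k%:R : R) ^+ 2 <= (x + 1) ^+ 3 / 3.
Proof.
move=> Mx; have x0 : 0 <= x := le_trans (ler0n _ _) Mx.
have -> : \sum_(1 <= k < M.+1) (k%:R : R) ^+ 2 = \sum_(1 <= k < M.+1) (k%:R : R) `^ 2.
  by apply: eq_bigr => k _; rewrite powR_mulrn.
apply: le_trans (sum_powR_le M (ler0n _ 2)) _.
rewrite (_ : (2 : R) + 1 = 3%:R) ?ler_pM2r ?invr_gt0 ?ltr0n //; last by ring.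
rewrite !powR_mulrn ?addr_ge0 // lerXn2r ?nnegrE ?addr_ge0 //.
by rewrite -natr1 lerD2r.
Qed.

Lemma sum_sqr_le_real (x : R) N : 0 <= x ->
  \sum_(1 <= k < N) (if k%:R <= x then (k%:R : R) ^+ 2 else 0) <= (x + 1) ^+ 3 / 3.
Proof.
move=> x0; have /andP[Mx xM] := truncn_itv x0; set M := Num.truncn x in Mx xM.
apply: le_trans (sum_nat_le_trunc (M := M) _ _ _) _.
- by move=> k; case: ifP => // _; exact: sqr_ge0.
- move=> k Mk; case: ifP => // kx.
  by move: (le_lt_trans kx xM); rewrite ltr_nat ltnS leqNgt Mk.
rewrite (eq_big_nat _ _ (F2 := fun k => (k%:R : R) ^+ 2)); first exact: sum_sqr_le.
by move=> k /andP[_ kM]; rewrite (le_trans _ Mx) // ler_nat -ltnS.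
Qed.

(* [\sum_k k^2 (1 - (k/W)^(b-1))^2] is a Riemann sum of [W^3 \int_0^1 x^2 (1 - x^(b-1))^2 dx]. *)
Lemma sum_taper_le_trunc b W M : 1 < b -> 2 * (2 * b + 1) <= W ->
  M%:R <= W -> W < M%:R + 1 ->
  \sum_(1 <= k < M.+1) (k%:R : R) ^+ 2 * (1 - (k%:R / W) `^ (b - 1)) ^+ 2
   <= (1 / 3 - 2 / (b + 2) + 1 / (2 * b + 1)) * W ^+ 3 + 6 * W ^+ 2.
Proof.
move=> b1 HW MW WM.
have b0 : 0 < b by rewrite (lt_trans ltr01).
have W0 : 0 < W by apply: lt_le_trans HW; lra.
have W2 : 2 <= W by lra.
set v := W `^ (1 - b); have v0 : 0 < v by rewrite powR_gt0.
have WW (c e : R) (n : nat) : c + e = n%:R -> W `^ c * W `^ e = W ^+ n.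
  by move=> cen; rewrite -gt0_powRD // cen powR_mulrn // ltW.
have v2 : v ^+ 2 = W `^ (2 - 2 * b).
  by rewrite expr2 -gt0_powRD //; congr (_ `^ _); ring.
have expand k : (0 < k)%N -> (k%:R : R) ^+ 2 * (1 - (k%:R / W) `^ (b - 1)) ^+ 2
    = k%:R ^+ 2 - 2 * (v * k%:R `^ (b + 1)) + v ^+ 2 * k%:R `^ (2 * b).
  move=> k0; have kp : (0 : R) < k%:R by rewrite ltr0n.
  rewrite powR_div ?ler0n // (_ : - (b - 1) = 1 - b) -/v; last by ring.
  have e1 : k%:R ^+ 2 * k%:R `^ (b - 1) = k%:R `^ (b + 1).
    by rewrite -powR_mulrn ?ler0n // -gt0_powRD //; congr (_ `^ _); ring.
  have e2 : k%:R `^ (b - 1) * k%:R `^ (b + 1) = k%:R `^ (2 * b).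
    by rewrite -gt0_powRD //; congr (_ `^ _); ring.
  rewrite -e2 -e1; ring.
rewrite (eq_big_nat _ _ (fun k kM => expand k (proj1 (andP kM)))).
rewrite !big_split /= sumrN -!mulr_sumr.
have S2 := sum_sqr_le MW.
have W1 : 1 <= W by lra.
have Sa : W ^+ 3 / (b + 2) - W ^+ 2 <= v * \sum_(1 <= k < M.+1) (k%:R : R) `^ (b + 1).
  have b10 : 0 <= b + 1 by lra.
  have := ler_wpM2l (ltW v0) (sum_powR_ge_real b10 W1 WM).
  rewrite (_ : b + 1 + 1 = b + 2); last by ring.
  suff -> : v * (W `^ (b + 2) / (b + 2) - W `^ (b + 1)) = W ^+ 3 / (b + 2) - W ^+ 2 by [].
  rewrite /v -(WW (1 - b) (b + 2) 3) -?(WW (1 - b) (b + 1) 2); ring.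
have Sb : v ^+ 2 * \sum_(1 <= k < M.+1) (k%:R : R) `^ (2 * b)
    <= W ^+ 3 / (2 * b + 1) + 2 * W ^+ 2.
  have b20 : 0 <= 2 * b by lra.
  have bW : 2 * (2 * b) <= W by lra.
  have := ler_wpM2l (ltW (exprn_gt0 2 v0)) (sum_powR_le_real b20 W0 bW MW).
  suff -> : v ^+ 2 * (W `^ (2 * b + 1) / (2 * b + 1) + 2 * W `^ (2 * b))
           = W ^+ 3 / (2 * b + 1) + 2 * W ^+ 2 by [].
  rewrite v2 -(WW (2 - 2 * b) (2 * b + 1) 3) -?(WW (2 - 2 * b) (2 * b) 2); ring.
have key : 0 <= W ^+ 2 - W - 1 / 3 by nra.
have -> : (1 / 3 - 2 / (b + 2) + 1 / (2 * b + 1)) * W ^+ 3 + 6 * W ^+ 2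
  = (W + 1) ^+ 3 / 3 - 2 * (W ^+ 3 / (b + 2) - W ^+ 2) + (W ^+ 3 / (2 * b + 1) + 2 * W ^+ 2)
    + (W ^+ 2 - W - 1 / 3).
  by field; apply/andP; split; rewrite gt_eqF //; lra.
lra.
Qed.

Lemma sum_taper_le b W N : 1 < b -> 2 * (2 * b + 1) <= W ->
  \sum_(1 <= k < N) (k%:R : R) ^+ 2 * Num.max 0 (1 - (k%:R / W) `^ (b - 1)) ^+ 2
  <= (1 / 3 - 2 / (b + 2) + 1 / (2 * b + 1)) * W ^+ 3 + 6 * W ^+ 2.
Proof.
move=> b1 HW; have W0 : 0 < W by apply: lt_le_trans HW; lra.
have /andP[MW WM] := truncn_itv (ltW W0); set M := Num.truncn W in MW WM.
have taper_cmp1 k : (W <= k%:R -> 1 <= (k%:R / W) `^ (b - 1))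
                   /\ (k%:R <= W -> (k%:R / W) `^ (b - 1) <= 1).
  have b10 : 0 <= b - 1 by lra.
  have kW0 : 0 <= k%:R / W := divr_ge0 (ler0n _ k) (ltW W0).
  split => kW.
  - have : 1 `^ (b - 1) <= (k%:R / W) `^ (b - 1).
      by apply: le_powR => //; rewrite ler_pdivlMr // mul1r.
    by rewrite powR1.
  - have : (k%:R / W) `^ (b - 1) <= 1 `^ (b - 1).
      by apply: le_powR => //; rewrite ler_pdivrMr // mul1r.
    by rewrite powR1.
apply: le_trans (sum_nat_le_trunc (M := M) _ _ _) _.
- by move=> k; rewrite mulr_ge0 ?sqr_ge0.
- move=> k Mk; rewrite max_l ?expr0n ?mulr0 // subr_le0; apply: (proj1 (taper_cmp1 k)).
  by rewrite ltW // (lt_le_trans WM) // ler_nat.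
rewrite (eq_big_nat _ _ (F2 := fun k => (k%:R : R) ^+ 2 * (1 - (k%:R / W) `^ (b - 1)) ^+ 2)).
  by apply: sum_taper_le_trunc; rewrite // natr1.
move=> k /andP[_ kM]; rewrite max_r // subr_ge0; apply: (proj2 (taper_cmp1 k)).
by rewrite (le_trans _ MW) // ler_nat -ltnS.
Qed.

End taper_sums.

Section nonneg_series.
Variable R : realType.
Local Open Scope ereal_scope.

Lemma sum_le_of_nneseries_le (u : nat -> R) (X : R) :
  (forall k, (1 <= k)%N -> (0 <= u k)%R) ->
  \sum_(1 <= k <oo) (u k)%:E <= X%:E -> forall N, (\sum_(1 <= k < N) u k <= X)%R.
Proof.
move=> u0 uX N; rewrite -lee_fin -sumEFin; apply: le_trans uX.
by apply: nneseries_lim_ge => k k1 _; rewrite lee_fin u0.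
Qed.

Lemma nneseries_le_of_sum_le (u : nat -> R) (X : R) :
  (forall k, (1 <= k)%N -> (0 <= u k)%R) ->
  (forall N, (\sum_(1 <= k < N) u k <= X)%R) -> \sum_(1 <= k <oo) (u k)%:E <= X%:E.
Proof.
move=> u0 uX; apply: lime_le.
  by apply: is_cvg_nneseries => k k1 _; rewrite lee_fin u0.
by apply: nearW => N; rewrite sumEFin lee_fin.
Qed.

End nonneg_series.

Section cosine_coefficients.
Variable R : realType.
Local Notation mu := (@lebesgue_measure R).

Lemma integrable_cosM (g : R -> R) (c : R) : loc_sq_int g ->
  mu.-integrable `[-(1/2), 1/2] (EFin \o (fun t => cos (c * t) * g t)).
Proof.
move=> [mg ig].
have cos_cont : continuous (fun t : R => cos (c * t)).
  by move=> x; apply: continuous_comp; [apply: cvgM; [exact: cvg_cst|exact: cvg_id]|exact: continuous_cos].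
have int1 : mu.-integrable `[-(1/2), 1/2]%classic (EFin \o (fun _ : R => (1 : R))).
  apply: continuous_compact_integrable; first exact: segment_compact.
  by apply: continuous_subspaceT => x; exact: cvg_cst.
apply: le_integrable (integrableD _ int1 (ig (-(1/2)) (1/2))) => //.
  apply/measurable_EFinP; apply: measurable_funS (measurable_funM _ mg) => //.
  exact: continuous_measurable_fun.
(* The integrand is dominated by [1 + g^2]. *)
move=> x _ /=; rewrite lee_fin normrM (@ger0_norm _ (1 + g x ^+ 2)) ?addr_ge0 ?sqr_ge0 //.
have cos1 : `|cos (c * x)| <= 1 by rewrite ler_norml cos_le1 cos_geN1.
have g1 : `|g x| <= 1 + g x ^+ 2 by rewrite ler_norml; apply/andP; split; nra.
by apply: le_trans g1; rewrite -[leRHS]mul1r ler_wpM2r.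
Qed.

Lemma cos_coefD (g h : R -> R) k : loc_sq_int g -> loc_sq_int h ->
  coef (fun t => g t + h t) k = coef g k + coef h k.
Proof.
move=> lg lh; rewrite /coef -mulrDr -RintegralD ?integrable_cosM //.
by congr (_ * _); apply: eq_Rintegral => t _; rewrite mulrDr.
Qed.

End cosine_coefficients.

Section taper_filter.
Variable R : realType.
Implicit Types (b bs W g eta a c eps Lv Lf : R) (k N : nat).

Definition taper (b W g : R) (k : nat) : R :=
  if k%:R <= g * W then 1 else Num.max 0 (1 - (k%:R / W) `^ (b - 1)).

Lemma lam_starE b L eps : lam_star b L eps = taper b (W_eps b L eps) (gamma_eps eps).
Proof. by []. Qed.

Lemma taper_bias_le b W k : 1 < b -> 0 < W -> (0 < k)%N ->
  (2 * pi * k%:R) ^+ 2 * (1 - Num.max 0 (1 - (k%:R / W) `^ (b - 1))) ^+ 2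
  <= (2 * pi * W) `^ (2 - 2 * b) * (2 * pi * k%:R) `^ (2 * b).
Proof.
move=> b1 W0 k0; have pi2 : (0 : R) < 2 * pi by rewrite mulr_gt0 // pi_gt0.
have kk : (0 : R) < 2 * pi * k%:R by rewrite mulr_gt0 ?ltr0n // mulr_gt0 // pi_gt0.
have WW : 0 < 2 * pi * W := mulr_gt0 pi2 W0.
set y := (k%:R / W) `^ (b - 1); have y0 : 0 <= y := powR_ge0 _ _.
have yE : (2 * pi * k%:R) ^+ 2 * y ^+ 2
    = (2 * pi * W) `^ (2 - 2 * b) * (2 * pi * k%:R) `^ (2 * b).
  rewrite /y (_ : k%:R / W = (2 * pi * k%:R) / (2 * pi * W)); last first.
    by rewrite -mulf_div divff ?mul1r // gt_eqF.
  rewrite -[X in _ * X]powR_mulrn ?powR_ge0 // -powRrM powR_div ?(ltW kk) //.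
  rewrite -[X in X * _]powR_mulrn ?(ltW kk) // mulrA -gt0_powRD // [LHS]mulrC.
  by congr (_ `^ _ * _ `^ _); ring.
have u0 : 0 <= 1 - Num.max 0 (1 - y) by rewrite subr_ge0 ge_max ler01 gerBl.
have uy : 1 - Num.max 0 (1 - y) <= y by rewrite lerBlDr -lerBlDl le_max lexx orbT.
by rewrite -yE ler_wpM2l ?sqr_ge0 // ler_sqr ?nnegrE.
Qed.

Lemma taper_bias_term_le b bs W g eta a c k :
  1 < b -> b < bs -> 0 < W -> 0 < g -> 0 < eta -> (0 < k)%N ->
  (2 * pi * k%:R) ^+ 2 * ((1 - taper b W g k) ^+ 2 * (a + c) ^+ 2)
  <= (2 * pi * W) `^ (2 - 2 * b) *
     ((1 + eta) * ((2 * pi * k%:R) `^ (2 * b) * c ^+ 2) + (1 + eta^-1) *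
      (2 * pi * (g * W)) `^ (2 * b - 2 * bs) * ((2 * pi * k%:R) `^ (2 * bs) * a ^+ 2)).
Proof.
move=> b1 bbs W0 g0 eta0 k0; have pi0 := pi_gt0 R.
have eta1 : 0 <= 1 + eta by rewrite addr_ge0 // ltW.
have etaV1 : 0 <= 1 + eta^-1 by rewrite addr_ge0 // invr_ge0 ltW.
set B := (2 * pi * W) `^ (2 - 2 * b); set G := (2 * pi * (g * W)) `^ (2 * b - 2 * bs).
set P := (2 * pi * k%:R) `^ (2 * b); set Q := (2 * pi * k%:R) `^ (2 * bs).
have B0 : 0 <= B := powR_ge0 _ _; have G0 : 0 <= G := powR_ge0 _ _.
have P0 : 0 <= P := powR_ge0 _ _; have Q0 : 0 <= Q := powR_ge0 _ _.
rewrite /taper; case: ifPn => [_|gWk].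
  rewrite subrr expr0n /= mulr0n !mul0r mulr0.
  exact: mulr_ge0 B0 (addr_ge0 (mulr_ge0 eta1 (mulr_ge0 P0 (sqr_ge0 c)))
    (mulr_ge0 (mulr_ge0 etaV1 G0) (mulr_ge0 Q0 (sqr_ge0 a)))).
rewrite -ltNge in gWk.
(* Above the threshold [g W], the smoothness gap [bs - b] is converted into the factor [G]. *)
have PQ : P <= G * Q.
  have pi2 : (0 : R) < 2 * pi by rewrite mulr_gt0 // pi_gt0.
  have kk : (0 : R) < 2 * pi * k%:R by rewrite mulr_gt0 // ltr0n.
  have -> : P = (2 * pi * k%:R) `^ (- (2 * bs - 2 * b)) * Q.
    by rewrite /P /Q -gt0_powRD //; congr (_ `^ _); ring.
  rewrite /G (_ : 2 * b - 2 * bs = - (2 * bs - 2 * b)); last by ring.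
  rewrite ler_wpM2r //; apply: ge_powRN.
  - by rewrite !mulr_gt0.
  - by rewrite ler_pM2l // ltW.
  - by rewrite subr_gt0 ltr_pM2l.
apply: le_trans (_ : B * P * ((1 + eta) * c ^+ 2 + (1 + eta^-1) * a ^+ 2) <= _).
  rewrite mulrA; apply: le_trans (ler_wpM2r (sqr_ge0 _) (taper_bias_le b1 W0 k0)) _.
  by rewrite ler_wpM2l ?mulr_ge0 // sqrD_le_weighted.
have -> : B * P * ((1 + eta) * c ^+ 2 + (1 + eta^-1) * a ^+ 2)
  = B * ((1 + eta) * (P * c ^+ 2) + (1 + eta^-1) * (P * a ^+ 2)) by ring.
rewrite -[(1 + eta^-1) * G * _]mulrA ler_wpM2l // lerD2l ler_wpM2l //.
by rewrite [leRHS]mulrA ler_wpM2r ?sqr_ge0.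
Qed.

Lemma taper_variance_term_le b W g k :
  taper b W g k ^+ 2
  <= Num.max 0 (1 - (k%:R / W) `^ (b - 1)) ^+ 2 + (if k%:R <= g * W then 1 else 0).
Proof. by rewrite /taper; case: ifP => _; rewrite ?addr0 // expr1n lerDr sqr_ge0. Qed.

Lemma sum_sqr_taper_le b W g N : 1 < b -> 0 <= g -> 2 * (2 * b + 1) <= W ->
  \sum_(1 <= k < N) (k%:R : R) ^+ 2 * taper b W g k ^+ 2
  <= (1 / 3 - 2 / (b + 2) + 1 / (2 * b + 1)) * W ^+ 3 + 6 * W ^+ 2 + (g * W + 1) ^+ 3 / 3.
Proof.
move=> b1 g0 HW; have W0 : 0 <= W by apply: le_trans HW; lra.
apply: le_trans (ler_sum_nat (fun k _ => ler_wpM2l (sqr_ge0 k%:R) (taper_variance_term_le b W g k))) _.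
under eq_bigr do rewrite mulrDr.
rewrite big_split /=; apply: lerD; first exact: sum_taper_le.
apply: le_trans (sum_sqr_le_real N (mulr_ge0 g0 W0)).
by apply: ler_sum_nat => k _; case: ifP => _; rewrite ?mulr1 ?mulr0.
Qed.

Lemma sum_bias_taper_le b bs W g eta Lv Lf (a c : nat -> R) N :
  1 < b -> b < bs -> 0 < W -> 0 < g -> 0 < eta ->
  (forall N, \sum_(1 <= k < N) (2 * pi * k%:R) `^ (2 * b) * c k ^+ 2 <= Lv) ->
  (forall N, \sum_(1 <= k < N) (2 * pi * k%:R) `^ (2 * bs) * a k ^+ 2 <= Lf) ->
  \sum_(1 <= k < N) (2 * pi * k%:R) ^+ 2 * ((1 - taper b W g k) ^+ 2 * (a k + c k) ^+ 2)
  <= (2 * pi * W) `^ (2 - 2 * b) *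
     ((1 + eta) * Lv + (1 + eta^-1) * (2 * pi * (g * W)) `^ (2 * b - 2 * bs) * Lf).
Proof.
move=> b1 bbs W0 g0 eta0 Lvc Lfa.
apply: le_trans (ler_sum_nat (fun k kN =>
  taper_bias_term_le (a k) (c k) b1 bbs W0 g0 eta0 (proj1 (andP kN)))) _.
rewrite -mulr_sumr big_split /= -!mulr_sumr ler_wpM2l ?powR_ge0 // lerD //.
  by rewrite ler_wpM2l ?addr_ge0 // ltW.
by rewrite ler_wpM2l ?mulr_ge0 ?powR_ge0 ?addr_ge0 ?invr_ge0 // ltW.
Qed.

End taper_filter.

Section bandwidth.
Variable R : realType.
Implicit Types b L eps M : R.

Local Ltac positivity := repeat first [ assumption | apply: pi_gt0 | apply: mulr_gt0
  | apply: divr_gt0 | apply: powR_gt0 | apply: exprn_gt0 | rewrite invr_gt0 | lra ].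

Lemma W_eps_gt0 b L eps : 1 < b -> 0 < L -> 0 < eps -> 0 < W_eps b L eps.
Proof. by move=> b1 L0 eps0; apply: powR_gt0; positivity. Qed.

Lemma ln_W_eps b L eps : 1 < b -> 0 < L -> 0 < eps ->
  ln (W_eps b L eps) = (ln L - 2 * ln eps + ln (b + 2) + ln (2 * b + 1)
    - 2 * b * (ln 2 + ln pi) - ln (b - 1)) / (2 * b + 1).
Proof.
move=> b1 L0 eps0; rewrite /W_eps ln_powR mulrC mul1r.
rewrite !lnM ?posrE; try by positivity.
rewrite !lnV ?posrE; try by positivity.
by rewrite !lnM ?posrE ?ln_powR ?lnM ?posrE; try by positivity.
Qed.

(* [W_eps] balances the variance [eps^2 W^3] against the squared bias [W^(2 - 2b) L]. *)
Lemma W_eps_balance b L eps : 1 < b -> 0 < L -> 0 < eps ->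
  eps ^+ 2 * (2 * pi) ^+ 2 * W_eps b L eps ^+ 3
  = (b + 2) * (2 * b + 1) / (b - 1) * ((2 * pi * W_eps b L eps) `^ (2 - 2 * b) * L).
Proof.
move=> b1 L0 eps0; have W0 := W_eps_gt0 b1 L0 eps0; have lnW := ln_W_eps b1 L0 eps0.
apply: ln_inj; rewrite ?posrE; try by positivity.
rewrite !lnM ?posrE; try by positivity.
rewrite lnV ?posrE; try by positivity.
rewrite ln_powR !lnM ?posrE; try by positivity.
by rewrite lnW; field; rewrite gt_eqF //; lra.
Qed.

Lemma Cconst_W_eps b L eps : 1 < b -> 0 < L -> 0 < eps ->
  Cconst b L * eps `^ ((4 * b - 4) / (2 * b + 1))
  = (2 * b + 1) / 3 * ((2 * pi * W_eps b L eps) `^ (2 - 2 * b) * L).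
Proof.
move=> b1 L0 eps0; have W0 := W_eps_gt0 b1 L0 eps0; have lnW := ln_W_eps b1 L0 eps0.
apply: ln_inj; rewrite ?posrE /Cconst; try by positivity.
rewrite !lnM ?posrE; try by positivity.
rewrite !lnV ?ln_powR ?posrE; try by positivity.
rewrite !lnM ?posrE; try by positivity.
rewrite ?lnV ?posrE; try by positivity.
rewrite !lnM ?posrE; try by positivity.
by rewrite ?ln1 lnW; field; rewrite !gt_eqF //; lra.
Qed.

(* With [u := eps ^ (-1/(2b+1))] one has [W_eps = K u^2] and [gamma_eps = 1/(2 (2b+1) ln u)], hence
   [W_eps], [1/gamma_eps] and [gamma_eps W_eps ~ K u^2 / ln u] all blow up as [eps -> 0]. *)
Lemma W_eps_gamma_eps_large b L M : 1 < b -> 0 < L -> 0 < M ->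
  exists2 eps0, 0 < eps0 & forall eps, 0 < eps -> eps < eps0 ->
    [/\ M <= W_eps b L eps, gamma_eps eps <= M^-1 & M <= gamma_eps eps * W_eps b L eps].
Proof.
move=> b1 L0 M0; set m := 2 * b + 1; have m0 : 0 < m by rewrite /m; lra.
set K := (L * ((b + 2) * m / ((2 * pi) `^ (2 * b) * (b - 1)))) `^ (1 / m).
have K0 : 0 < K by apply: powR_gt0; positivity.
set U := Num.max 2 (Num.max (M / K) (Num.max (expR (M / (2 * m))) (2 * m * M / K))).
have [U2 UMK UexpM U2mMK] : [/\ 2 <= U, M / K <= U, expR (M / (2 * m)) <= U & 2 * m * M / K <= U].
  by rewrite !le_max !lexx !orbT.
have U0 : 0 < U by lra.
exists (U `^ (- m)); first exact: powR_gt0.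
move=> eps eps0 epsU; set u := eps `^ (- (1 / m)).
have uU : U <= u.
  have := ge_powRN eps0 (ltW epsU) (divr_gt0 ltr01 m0).
  rewrite -powRrM (_ : - m * - (1 / m) = 1) ?powRr1 ?(ltW U0) //.
  by field; rewrite gt_eqF.
have lnu0 : 0 < ln u by apply: ln_gt0; lra.
have lnuu : ln u <= u by apply/ltW/ln_sublinear; lra.
have WE : W_eps b L eps = K * u ^+ 2.
  rewrite -[u ^+ 2]powR_mulrn ?powR_ge0 // /u -powRrM /W_eps -/m /K.
  rewrite (_ : L / eps ^+ 2 * _ = L * ((b + 2) * m / ((2 * pi) `^ (2 * b) * (b - 1))) * eps ^-2);
    last by rewrite /m; ring.
  rewrite powRM ?invr_ge0 ?exprn_ge0 ?ltW //; last by positivity.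
  congr (_ * _); rewrite -powR_invn ?(ltW eps0) // -powRrM; congr (_ `^ _); field.
  by rewrite gt_eqF.
have gE : gamma_eps eps = (2 * m * ln u)^-1.
  rewrite /gamma_eps /u ln_powR lnV ?posrE ?exprn_gt0 // lnXn //.
  by rewrite div1r; congr (_^-1); field; rewrite gt_eqF.
rewrite WE gE; split.
- apply: le_trans (_ : K * u <= _).
    by rewrite -ler_pdivrMl // mulrC (le_trans UMK uU).
  by rewrite ler_wpM2l ?(ltW K0) // expr2 ler_peMl //; lra.
- rewrite lef_pV2 ?posrE ?mulr_gt0 // -ler_pdivrMl ?mulr_gt0 //.
  by rewrite mulrC -ler_expR lnK ?posrE; lra.
- have -> : (2 * m * ln u)^-1 * (K * u ^+ 2) = K * u / (2 * m) * (u / ln u).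
    by rewrite expr2; field; rewrite !gt_eqF.
  apply: le_trans (_ : K * u / (2 * m) <= _).
    have := le_trans U2mMK uU; rewrite ler_pdivrMr // ler_pdivlMr ?mulr_gt0 //; lra.
  have Ku0 : 0 <= K * u / (2 * m).
    by apply: divr_ge0; [apply: mulr_ge0; apply: ltW | apply: ltW]; lra.
  by rewrite ler_peMr // ler_pdivlMr // mul1r.
Qed.

End bandwidth.

Section risk_bound.
Variable R : realType.
Implicit Types (b bs W g eps eta L Lf d c : R).

Lemma risk_taper_le b bs W g eps eta L Lf (fbar v : R -> R) :
  1 < b -> b < bs -> 0 < g -> 0 < eta -> 2 * (2 * b + 1) <= W ->
  loc_sq_int fbar -> loc_sq_int v -> (sob2 bs fbar <= Lf%:E)%E -> (sob2 b v <= L%:E)%E ->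
  (risk eps (fun t => (fbar t + v t)%R) (taper b W g) <=
   ((2 * pi * W) `^ (2 - 2 * b) *
      ((1 + eta) * L + (1 + eta^-1) * (2 * pi * (g * W)) `^ (2 * b - 2 * bs) * Lf)
    + eps ^+ 2 * (2 * pi) ^+ 2 * ((1 / 3 - 2 / (b + 2) + 1 / (2 * b + 1)) * W ^+ 3
      + 6 * W ^+ 2 + (g * W + 1) ^+ 3 / 3))%R%:E)%E.
Proof.
move=> b1 bbs g0 eta0 HW lsfbar lsv sobfbar sobv.
have W0 : 0 < W by apply: lt_le_trans HW; lra.
have sob_partial beta (h : R -> R) X : (sob2 beta h <= X%:E)%E ->
    forall N, \sum_(1 <= k < N) (2 * pi * k%:R) `^ (2 * beta) * coef h k ^+ 2 <= X.
  by apply: sum_le_of_nneseries_le => k _; rewrite mulr_ge0 ?powR_ge0 ?sqr_ge0.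
apply: nneseries_le_of_sum_le => [k _|N].
  by rewrite mulr_ge0 ?sqr_ge0 // addr_ge0 // mulr_ge0 ?sqr_ge0.
under eq_bigr do rewrite (cos_coefD _ lsfbar lsv) mulrDr.
rewrite big_split /= lerD //.
  exact: sum_bias_taper_le b1 bbs W0 g0 eta0 (sob_partial _ _ _ sobv) (sob_partial _ _ _ sobfbar).
rewrite (eq_bigr (fun k => eps ^+ 2 * (2 * pi) ^+ 2 * (k%:R ^+ 2 * taper b W g k ^+ 2)));
  last by move=> k _; rewrite /=; ring.
rewrite -mulr_sumr ler_wpM2l ?(mulr_ge0 (sqr_ge0 eps) (sqr_ge0 (2 * pi))) //.
exact: sum_sqr_taper_le N b1 (ltW g0) HW.
Qed.

Lemma risk_bound_arith b c d W g eps B0 L G Lf :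
  1 < b -> c = (b + 2) * (2 * b + 1) / (b - 1) -> 0 < d -> 0 <= B0 -> 0 < L -> 0 < W -> 0 <= g ->
  eps ^+ 2 * (2 * pi) ^+ 2 * W ^+ 3 = c * (B0 * L) ->
  6 * c <= d * W -> g + W^-1 <= 1 -> c * (g + W^-1) <= 3 * d -> (1 + d^-1) * G * Lf <= d * L ->
  B0 * ((1 + d) * L + (1 + d^-1) * G * Lf) + eps ^+ 2 * (2 * pi) ^+ 2 *
    ((1 / 3 - 2 / (b + 2) + 1 / (2 * b + 1)) * W ^+ 3 + 6 * W ^+ 2 + (g * W + 1) ^+ 3 / 3)
  <= ((2 * b + 1) / 3 + 4 * d) * (B0 * L).
Proof.
move=> b1 cE d0 B00 L0 W0 g0 VW cW s1 cs GLf.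
set B := B0 * L; set V := eps ^+ 2 * (2 * pi) ^+ 2 in VW *; set s := g + W^-1 in s1 cs.
have c0 : 0 < c by rewrite cE; apply: divr_gt0; [apply: mulr_gt0|]; lra.
have B0' : 0 <= B by rewrite mulr_ge0 // ltW.
have VE : V = c * B / W ^+ 3 by rewrite -VW mulfK // expf_neq0 // gt_eqF.
have s0 : 0 <= s by rewrite addr_ge0 // invr_ge0 ltW.
have bias : B0 * ((1 + d^-1) * G * Lf) <= d * B.
  by rewrite /B [leRHS]mulrCA; apply: ler_wpM2l.
have main_var : V * ((1 / 3 - 2 / (b + 2) + 1 / (2 * b + 1)) * W ^+ 3) = 2 * (b - 1) / 3 * B.
  by rewrite VE cE; field; rewrite !gt_eqF //; lra.
have var_W2 : V * (6 * W ^+ 2) <= d * B.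
  rewrite VE (_ : c * B / W ^+ 3 * (6 * W ^+ 2) = (6 * c) / W * B); last by field; rewrite gt_eqF.
  by rewrite ler_wpM2r // ler_pdivrMr // mulrC.
(* The coefficients below the threshold [g W] contribute [c (g + 1/W)^3 / 3] times the bias. *)
have var_flat : V * ((g * W + 1) ^+ 3 / 3) <= d * B.
  rewrite VE (_ : c * B / W ^+ 3 * ((g * W + 1) ^+ 3 / 3) = c * s ^+ 3 / 3 * B);
    last by rewrite /s; field; rewrite gt_eqF.
  have s3 : s ^+ 3 <= s.
    by rewrite exprSr -[leRHS]mul1r; apply: ler_wpM2r => //; exact: exprn_ile1.
  by rewrite ler_wpM2r // ler_pdivrMr //; apply: le_trans (ler_wpM2l (ltW c0) s3) _; lra.
have -> : B0 * ((1 + d) * L + (1 + d^-1) * G * Lf) + V *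
    ((1 / 3 - 2 / (b + 2) + 1 / (2 * b + 1)) * W ^+ 3 + 6 * W ^+ 2 + (g * W + 1) ^+ 3 / 3)
  = (1 + d) * B + B0 * ((1 + d^-1) * G * Lf)
    + V * ((1 / 3 - 2 / (b + 2) + 1 / (2 * b + 1)) * W ^+ 3) + V * (6 * W ^+ 2)
    + V * ((g * W + 1) ^+ 3 / 3) by rewrite /B; ring.
rewrite main_var; lra.
Qed.

Lemma risk_bound_sharp b bs d L Lf : 1 < b -> b < bs -> 0 < d -> 0 < L -> 0 < Lf ->
  exists2 M, 2 * (2 * b + 1) <= M & forall W g eps,
    M <= W -> g <= M^-1 -> M <= g * W ->
    eps ^+ 2 * (2 * pi) ^+ 2 * W ^+ 3
      = (b + 2) * (2 * b + 1) / (b - 1) * ((2 * pi * W) `^ (2 - 2 * b) * L) ->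
    (2 * pi * W) `^ (2 - 2 * b) *
      ((1 + d) * L + (1 + d^-1) * (2 * pi * (g * W)) `^ (2 * b - 2 * bs) * Lf)
    + eps ^+ 2 * (2 * pi) ^+ 2 * ((1 / 3 - 2 / (b + 2) + 1 / (2 * b + 1)) * W ^+ 3
      + 6 * W ^+ 2 + (g * W + 1) ^+ 3 / 3)
    <= ((2 * b + 1) / 3 + 4 * d) * ((2 * pi * W) `^ (2 - 2 * b) * L).
Proof.
move=> b1 bbs d0 L0 Lf0; set c := (b + 2) * (2 * b + 1) / (b - 1).
have c0 : 0 < c by apply: divr_gt0; [apply: mulr_gt0|]; lra.
have pi2 : (0 : R) < 2 * pi by rewrite mulr_gt0 // pi_gt0.
set e := 2 * bs - 2 * b; have e0 : 0 < e by rewrite /e; lra.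
set tau := d * L / ((1 + d^-1) * Lf).
have dLf : 0 < (1 + d^-1) * Lf by rewrite mulr_gt0 // addr_gt0 // invr_gt0.
have tau0 : 0 < tau by rewrite divr_gt0 // mulr_gt0.
set M := Num.max (2 * (2 * b + 1))
  (Num.max (6 * c / d) (Num.max (2 * c / (3 * d)) (tau `^ (- e^-1) / (2 * pi)))).
have [M1 Mc Mcs Mtau] : [/\ 2 * (2 * b + 1) <= M, 6 * c / d <= M, 2 * c / (3 * d) <= M
                         & tau `^ (- e^-1) / (2 * pi) <= M] by rewrite !le_max !lexx !orbT.
have M0 : 0 < M by lra.
exists M => // W g eps MW gM MgW VW.
have W0 : 0 < W by lra.
have g0 : 0 <= g by rewrite -(pmulr_lge0 _ W0) ltW // (lt_le_trans M0).
have WM : W^-1 <= M^-1 by rewrite lef_pV2.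
apply: (@risk_bound_arith b c d W g eps _ L _ Lf b1 erefl d0 (powR_ge0 _ _) L0 W0 g0 VW).
- by move: (le_trans Mc MW); rewrite ler_pdivrMr //; lra.
- apply: le_trans (_ : 2 * M^-1 <= _); first lra.
  by rewrite ler_pdivrMr // mul1r; lra.
- apply: le_trans (_ : c * (2 * M^-1) <= _); first by apply: ler_wpM2l; [exact: ltW | lra].
  by rewrite mulrA ler_pdivrMr //; move: Mcs; rewrite ler_pdivrMr ?mulr_gt0 //; lra.
(* [(2 pi g W)^(-e) <= (2 pi M)^(-e) <= tau] *)
have Mtau' : tau `^ (- e^-1) <= 2 * pi * M by rewrite -ler_pdivrMl // mulrC.
have := ge_powRN (powR_gt0 _ tau0) Mtau' e0.
rewrite -powRrM (_ : - e^-1 * - e = 1); last by field; rewrite gt_eqF.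
rewrite powRr1; last exact: ltW.
have gW : 2 * pi * M <= 2 * pi * (g * W) by rewrite ler_pM2l.
move=> /(le_trans (ge_powRN (mulr_gt0 pi2 M0) gW e0)).
rewrite (_ : - e = 2 * b - 2 * bs); last by rewrite /e; ring.
move=> Gtau; apply: le_trans (_ : (1 + d^-1) * tau * Lf <= _).
  apply: ler_wpM2r; first exact: ltW.
  by apply: ler_wpM2l => //; rewrite addr_ge0 // invr_ge0 ltW.
by rewrite /tau mulrAC [X in X <= _]mulrC divfK ?gt_eqF.
Qed.

End risk_bound.

Theorem mainTheorem12 (R : realType) (beta betas L Ls rho r : R) (fbar : R -> R) :
  1 < beta -> beta < betas -> 0 < L -> 0 < Ls -> 0 < rho -> 0 < r ->
  Fclass betas Ls rho fbar ->
  forall delta : R, 0 < delta ->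
  exists eps0 : R, 0 < eps0 /\
    forall eps : R, 0 < eps -> eps < eps0 ->
    forall f : R -> R, Frbl r beta L fbar f ->
      (risk eps f (lam_star beta L eps) <=
        ((1 + delta) * Cconst beta L *
           eps `^ ((4 * beta - 4) / (2 * beta + 1)))%:E)%E.
Proof.
move=> b1 bbs L0 Ls0 _ _ [[lsfbar _ _ _] sobfbar] delta delta0.
set d := delta * (2 * beta + 1) / 12; have d0 : 0 < d by rewrite !mulr_gt0 //; lra.
have [M M_ge bound_sharp] := risk_bound_sharp b1 bbs d0 L0 (exprn_gt0 2 Ls0).
have M0 : 0 < M by lra.
have [eps0 eps0_gt0 large] := W_eps_gamma_eps_large b1 L0 M0.
exists eps0; split => // eps eps_gt0 eps_lt _ [v [_ _ lsv [-> _ sobv]]].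
have [MW gM MgW] := large eps eps_gt0 eps_lt.
have W0 := W_eps_gt0 b1 L0 eps_gt0.
have g0 : 0 < gamma_eps eps by rewrite -(pmulr_lgt0 _ W0) (lt_le_trans M0).
rewrite lam_starE -mulrA Cconst_W_eps // (_ : (1 + delta) * _ = ((2 * beta + 1) / 3 + 4 * d) *
  ((2 * pi * W_eps beta L eps) `^ (2 - 2 * beta) * L)); last by rewrite /d; field.
apply: le_trans (risk_taper_le eps b1 bbs g0 d0 (le_trans M_ge MW) lsfbar lsv sobfbar sobv) _.
by rewrite lee_fin bound_sharp // W_eps_balance.
Qed.
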